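(* If $X'$ is separable in the weak$^*$ topology $\sigma(X',X)$, then every multimeasure $M:\Sigma\to c(X)$ satisfies the countable chain condition.
   Context: $(\Omega,\Sigma)$ is a measurable space and $X$ is a Hausdorff locally convex space with dual $X'$. $c(X)$ is the family of nonempty closed convex subsets of $X$; $s(x',C)=\sup\{\langle x',x\rangle:x\in C\}$. A multimeasure is a map $M:\Sigma\to c(X)$ such that for every $x'\in X'$ the set function $s(x',M(\cdot))$ is a $\sigma$-finite countably additive measure with values in $(-\infty,+\infty]$. $\mathcal N(M)=\{E\in\Sigma:M(E)=\{0\}\}$. $M$ satisfies the countable chain condition if every family of pairwise disjoint sets in $\Sigma\setminus\mathcal N(M)$ is at most countable. *)

From HB Require Import structures.
From mathcomp Require Import all_boot all_order all_algebra.
From mathcomp Require Import all_classical all_reals all_analysis.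
Set Implicit Arguments. Unset Strict Implicit. Unset Printing Implicit Defensive.
Import Order.TTheory GRing.Theory Num.Theory.
Local Open Scope classical_set_scope.
Local Open Scope ring_scope.

(* Real Hausdorff locally convex spaces are modelled as [X : tvsType R]
   (locally convex topological vector spaces of mathcomp-analysis) together
   with the hypothesis [hausdorff_space X]. *)

Definition dual (R : realType) (X : tvsType R) : set (X -> R) :=
  [set f | (forall (a : R) (x y : X), f (a *: x + y) = a * f x + f y)
           /\ continuous (f : X -> R^o)].

Definition cX (R : realType) (X : tvsType R) : set (set X) :=
  [set C | C !=set0 /\ closed C /\ convex_set (C : set (convex_lmodType X))].

Definition supp_fun (R : realType) (X : tvsType R) (f : X -> R) (C : set X)
  : \bar R := ereal_sup [set (f x)%:E | x in C].

Definition ext_signed_measure d (T : measurableType d) (R : realType)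
    (mu : set T -> \bar R) :=
  [/\ mu set0 = 0%E,
      (forall E, measurable E -> (-oo < mu E)%E),
      semi_sigma_additive mu &
      sigma_finite setT mu].

(* multimeasure M : Sigma -> c(X) (values outside Sigma are irrelevant) *)
Definition multimeasure d (T : measurableType d) (R : realType)
    (X : tvsType R) (M : set T -> set X) :=
  (forall E, measurable E -> cX (M E)) /\
  (forall f, dual f -> ext_signed_measure (fun E => supp_fun f (M E))).

Definition null_sets d (T : measurableType d) (R : realType)
    (X : tvsType R) (M : set T -> set X) : set (set T) :=
  [set E | measurable E /\ M E = [set 0]].

Definition ccc d (T : measurableType d) (R : realType)
    (X : tvsType R) (M : set T -> set X) :=
  forall F : set (set T),
    (forall A, F A -> measurable A /\ ~ null_sets M A) ->
    (forall A B, F A -> F B -> A <> B -> A `&` B = set0) ->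
    countable F.

(* X' is separable for sigma(X', X): some countable D in X' meets every
   basic weak* neighbourhood {g in X' | |g x_i - f x_i| < e, i = 1..n}. *)
Definition weak_star_separable (R : realType) (X : tvsType R) :=
  exists D : set (X -> R),
    [/\ countable D, D `<=` @dual R X &
      forall f, @dual R X f -> forall (s : seq X) (e : R), 0 < e ->
        exists2 g, D g & forall x, x \in s -> `|f x - g x| < e].

From HB Require Import structures.
From mathcomp Require Import all_boot all_order all_algebra.
From mathcomp Require Import all_classical all_reals all_analysis.
From mathcomp Require Import ring lra.
Set Implicit Arguments. Unset Strict Implicit. Unset Printing Implicit Defensive.
Import Order.TTheory GRing.Theory Num.Theory.
Local Open Scope classical_set_scope.
Local Open Scope ring_scope.

(* Let D be a countable weak*-dense subset of the dual X'.  If M(A) is not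
   {0}, then some g in D has s(g, M(A)) <> 0: a nonzero point of M(A) is
   separated by a continuous functional (Hahn-Banach), and density transfers
   this to D.  Hence a disjoint family of non-null sets is covered by the
   countably many families {A | s(g, M(A)) <> 0}, g in D, each of which is
   countable because s(g, M(.)) is a sigma-finite (-oo, +oo]-valued measure. *)

Section sublinear.
Context (R : realType) (X : lmodType R).

Definition sublinear (q : X -> R) :=
  (forall y z, q (y + z) <= q y + q z) /\
  (forall (t : R) y, 0 < t -> q (t *: y) <= t * q y).

Definition linear_functional (f : X -> R) :=
  forall (a : R) x y, f (a *: x + y) = a * f x + f y.

Lemma sublinearZ q t y : sublinear q -> 0 < t -> q (t *: y) = t * q y.
Proof.
move=> [_ qZ] t0; apply/eqP; rewrite eq_le qZ //=.
have := qZ t^-1 (t *: y); rewrite invr_gt0 scalerA mulVf ?gt_eqF // scale1r.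
by move=> /(_ t0); rewrite -(ler_pM2l t0) mulrA mulfV ?gt_eqF // mul1r.
Qed.

Lemma sublinear0 q : sublinear q -> q 0 = 0.
Proof.
by move=> sq; have := @sublinearZ q 2 0 sq; rewrite scaler0 => /(_ (ltr0n _ 2)); lra.
Qed.

Lemma sublinear_opp_le q y : sublinear q -> - q (- y) <= q y.
Proof.
move=> sq; have := sq.1 y (- y).
by rewrite subrr sublinear0 // -lerBlDr sub0r.
Qed.

Section linear_functional.
Variables (f : X -> R) (lf : linear_functional f).

Lemma linear_functional0 : f 0 = 0.
Proof. by have := lf 1 0 0; rewrite scaler0 addr0 mul1r; lra. Qed.

Lemma linear_functionalD y z : f (y + z) = f y + f z.
Proof. by rewrite -[y in LHS]scale1r lf mul1r. Qed.

Lemma linear_functionalZ a y : f (a *: y) = a * f y.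
Proof. by rewrite -[_ *: _]addr0 lf linear_functional0 addr0. Qed.

Lemma linear_functionalN y : f (- y) = - f y.
Proof. by rewrite -scaleN1r linear_functionalZ mulN1r. Qed.

End linear_functional.

Lemma additive_sublinear_linear q : sublinear q ->
  (forall y z, q (y + z) = q y + q z) -> linear_functional q.
Proof.
move=> sq qD a x y; rewrite qD; congr (_ + _).
have qN z : q (- z) = - q z.
  by have := qD z (- z); rewrite subrr sublinear0 //; lra.
have [a0|a0|->] := ltgtP a 0; last by rewrite scale0r mul0r sublinear0.
- have := @sublinearZ q (- a) x sq; rewrite oppr_gt0 scaleNr qN => /(_ a0); lra.
- by rewrite sublinearZ.
Qed.

(* Given [c <= q y], [shift q y c z = inf_(t >= 0) q (z + t y) - t c] is a
   sublinear functional below [q] with [shift q y c (- y) <= - c]: it pushes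
   [q] down in the direction [- y]. *)
Definition shift (q : X -> R) (y : X) (c : R) (z : X) : R :=
  inf [set q (z + t *: y) - t * c | t in [set t : R | 0 <= t]].

Section shift.
Variables (q : X -> R) (y : X) (c : R).
Hypotheses (sq : sublinear q) (cq : c <= q y).

Let shift_set z := [set q (z + t *: y) - t * c | t in [set t : R | 0 <= t]].

Let shift_set_lbound z : has_lbound (shift_set z).
Proof.
exists (- q (- z)) => _ [t /= t0 <-].
have := sq.1 (z + t *: y) (- z); rewrite addrC addKr.
have : t * c <= q (t *: y).
  have [->|tn0] := eqVneq t 0; first by rewrite mul0r scale0r sublinear0.
  by rewrite sublinearZ ?ler_pM2l // lt_neqAle eq_sym tn0.
lra.
Qed.

Lemma shift_le z t : 0 <= t -> shift q y c z <= q (z + t *: y) - t * c.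
Proof. by move=> t0; apply: ge_inf (shift_set_lbound z) _ _; exists t. Qed.

Lemma shift_ge z r : (forall t, 0 <= t -> r <= q (z + t *: y) - t * c) ->
  r <= shift q y c z.
Proof.
move=> h; apply: lb_le_inf => [|_ [t t0 <-]]; last exact: h.
by exists (q (z + 0 *: y) - 0 * c); exists 0 => //=.
Qed.

Lemma shift_le_self z : shift q y c z <= q z.
Proof. by have := shift_le z (le_refl 0); rewrite scale0r addr0 mul0r subr0. Qed.

Lemma shift_opp : shift q y c (- y) <= - c.
Proof.
by have := shift_le (- y) ler01; rewrite scale1r addNr sublinear0 // mul1r sub0r.
Qed.

Lemma shift_sublinear : sublinear (shift q y c).
Proof.
split=> [z1 z2|s z s0].
- have sum_le t1 t2 : 0 <= t1 -> 0 <= t2 -> shift q y c (z1 + z2) <=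
      (q (z1 + t1 *: y) - t1 * c) + (q (z2 + t2 *: y) - t2 * c).
    move=> t10 t20; apply: le_trans (shift_le _ (addr_ge0 t10 t20)) _.
    have := sq.1 (z1 + t1 *: y) (z2 + t2 *: y).
    by rewrite addrACA -scalerDl mulrDl; lra.
  suff : shift q y c (z1 + z2) - shift q y c z1 <= shift q y c z2 by lra.
  apply: shift_ge => t2 t20.
  suff : shift q y c (z1 + z2) - (q (z2 + t2 *: y) - t2 * c) <= shift q y c z1.
    lra.
  by apply: shift_ge => t1 t10; have := sum_le t1 t2 t10 t20; lra.
- rewrite -ler_pdivrMl //; apply: shift_ge => t t0; rewrite ler_pdivrMl //.
  apply: le_trans (shift_le (s *: z) (mulr_ge0 (ltW s0) t0)) _.
  by rewrite -scalerA -scalerDr sublinearZ // mulrBr mulrA.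
Qed.

End shift.

Lemma minimal_sublinear_linear q : sublinear q ->
  (forall q', sublinear q' -> (forall z, q' z <= q z) -> forall z, q z <= q' z) ->
  linear_functional q.
Proof.
move=> sq qmin; apply: additive_sublinear_linear => // y z.
apply/eqP; rewrite eq_le sq.1 /=.
have := qmin _ (shift_sublinear sq (le_refl (q z))) (shift_le_self sq (le_refl _)) y.
have := shift_le sq (le_refl (q z)) y ler01; rewrite scale1r mul1r; lra.
Qed.

(* The pointwise infimum of a nonempty chain of sublinear functionals that are
   all dominated by a common [p] is again sublinear: this is the lower bound
   needed for Zorn's lemma. *)
Section chain_inf.
Variables (p : X -> R) (A : set (X -> R)).
Hypothesis A_sub : forall s, A s -> sublinear s.
Hypothesis A_le : forall s, A s -> forall z, s z <= p z.
Hypothesis A_chain : total_on A (fun s1 s2 => forall z, s1 z <= s2 z).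
Hypothesis A_ne : A !=set0.

Definition chain_inf (z : X) : R := inf [set s z | s in A].

Let chain_lbound z : has_lbound [set s z | s in A].
Proof.
exists (- p (- z)) => _ [s As <-].
by have := A_le As (- z); have := sublinear_opp_le z (A_sub As); lra.
Qed.

Lemma chain_inf_le s z : A s -> chain_inf z <= s z.
Proof. by move=> As; apply: ge_inf (chain_lbound z) _ _; exists s. Qed.

Let chain_inf_ge z r : (forall s, A s -> r <= s z) -> r <= chain_inf z.
Proof.
move=> h; apply: lb_le_inf => [|_ [s As <-]]; last exact: h.
by have [s As] := A_ne; exists (s z); exists s.
Qed.

Lemma chain_inf_sublinear : sublinear chain_inf.
Proof.
split=> [y z|t y t0].
- have sum_le s1 s2 : A s1 -> A s2 -> chain_inf (y + z) <= s1 y + s2 z.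
    move=> A1 A2; have [le12|le21] := A_chain A1 A2.
    + apply: le_trans (chain_inf_le _ A1) _.
      by apply: le_trans ((A_sub A1).1 y z) _; rewrite lerD2l.
    + apply: le_trans (chain_inf_le _ A2) _.
      by apply: le_trans ((A_sub A2).1 y z) _; rewrite lerD2r.
  suff : chain_inf (y + z) - chain_inf y <= chain_inf z by lra.
  apply: chain_inf_ge => s2 A2.
  suff : chain_inf (y + z) - s2 z <= chain_inf y by lra.
  by apply: chain_inf_ge => s1 A1; have := sum_le s1 s2 A1 A2; lra.
- rewrite -ler_pdivrMl //; apply: chain_inf_ge => s As; rewrite ler_pdivrMl //.
  exact: le_trans (chain_inf_le _ As) ((A_sub As).2 t y t0).
Qed.

End chain_inf.

(* By Zorn's lemma there is a minimal sublinear functional below [p],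
   and it is linear by [minimal_sublinear_linear]. *)
Theorem hahn_banach_dominated p : sublinear p ->
  exists2 f, linear_functional f & forall z, f z <= p z.
Proof.
move=> sp.
pose T := {q : X -> R | sublinear q /\ forall z, q z <= p z}.
pose below (q1 q2 : T) := `[< forall z, sval q2 z <= sval q1 z >].
have [[q [sq qp]] qmin] : exists t, premaximal below t.
  apply: (ZL_preorder (exist _ p (conj sp (fun z => le_refl _)))).
  - by move=> q; apply/asboolP => z.
  - move=> q1 q2 q3 /asboolP le12 /asboolP le23; apply/asboolP => z.
    exact: le_trans (le23 z) (le12 z).
  move=> A A_tot.
  have [[a Aa]|A0] := pselect (A !=set0); last first.
    by exists (exist _ p (conj sp (fun z => le_refl _))) => s As; case: A0; exists s.
  pose B := sval @` A.
  have B_sub s : B s -> sublinear s by move=> [s' _ <-]; exact: (svalP s').1.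
  have B_le s : B s -> forall z, s z <= p z by move=> [s' _ <-]; exact: (svalP s').2.
  have B_chain : total_on B (fun s1 s2 => forall z, s1 z <= s2 z).
    move=> _ _ [s1 A1 <-] [s2 A2 <-].
    by case: (A_tot _ _ A1 A2) => /asboolP h; [right | left].
  have Ba : B (sval a) by exists a.
  have l_le s z : B s -> chain_inf B z <= s z := chain_inf_le B_sub B_le z.
  have l_p z : chain_inf B z <= p z := le_trans (l_le _ z Ba) (B_le _ Ba z).
  have l_sub := chain_inf_sublinear B_sub B_le B_chain (ex_intro _ _ Ba).
  exists (exist _ (chain_inf B) (conj l_sub l_p)) => s As; apply/asboolP => z /=.
  by apply: l_le; exists s.
exists q => //; apply: minimal_sublinear_linear => // q' sq' q'q z.
have q'p w : q' w <= p w := le_trans (q'q w) (qp w).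
have /qmin /asboolP : below (exist _ q (conj sq qp)) (exist _ q' (conj sq' q'p)).
  by apply/asboolP.
by apply.
Qed.

End sublinear.

Section gauge.
Context (R : realType) (X : lmodType R) (V : set X).
Hypothesis V0 : V 0.
Hypothesis V_convex : forall a b (l : R), 0 <= l -> l <= 1 -> V a -> V b ->
  V (l *: a + (1 - l) *: b).
Hypothesis V_absorbing : forall z : X, exists t : R, 0 < t /\ V (t^-1 *: z).

Definition gauge (z : X) : R := inf [set t : R | 0 < t /\ V (t^-1 *: z)].

Lemma gauge_le z t : 0 < t -> V (t^-1 *: z) -> gauge z <= t.
Proof. by move=> t0 Vt; apply: ge_inf; [exists 0 => s [/ltW] | split]. Qed.

Let gauge_ge z r : (forall t, 0 < t -> V (t^-1 *: z) -> r <= t) -> r <= gauge z.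
Proof.
move=> h; apply: lb_le_inf => [|t [t0 Vt]]; last exact: h.
by have [t ht] := V_absorbing z; exists t.
Qed.

Lemma gauge_le1 z : V z -> gauge z <= 1.
Proof. by move=> Vz; apply: gauge_le => //; rewrite invr1 scale1r. Qed.

Lemma gauge_ge1 z : ~ V z -> 1 <= gauge z.
Proof.
move=> nVz; rewrite leNgt; apply/negP.
have [t0 ht0] := V_absorbing z.
move=> /(inf_lt (ex_intro _ t0 ht0)) [t [t_gt0 Vt] t1].
apply: nVz; have := V_convex (ltW t_gt0) (ltW t1) Vt V0.
by rewrite scaler0 addr0 scalerA mulfV ?gt_eqF // scale1r.
Qed.

Lemma gauge_sublinear : sublinear gauge.
Proof.
split=> [z1 z2|t z t0].
- have sum_le s1 s2 : 0 < s1 -> V (s1^-1 *: z1) -> 0 < s2 -> V (s2^-1 *: z2) ->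
      gauge (z1 + z2) <= s1 + s2.
    move=> s10 V1 s20 V2; apply: gauge_le; first exact: addr_gt0.
    have l0 : 0 <= s1 / (s1 + s2) by rewrite divr_ge0 // ltW // addr_gt0.
    have l1 : s1 / (s1 + s2) <= 1.
      by rewrite ler_pdivrMr ?addr_gt0 // mul1r lerDl ltW.
    have := V_convex l0 l1 V1 V2; congr V; rewrite !scalerA scalerDr.
    by congr (_ *: _ + _ *: _); field; lra.
  suff : gauge (z1 + z2) - gauge z1 <= gauge z2 by lra.
  apply: gauge_ge => s2 s20 V2.
  suff : gauge (z1 + z2) - s2 <= gauge z1 by lra.
  by apply: gauge_ge => s1 s10 V1; have := sum_le s1 s2 s10 V1 s20 V2; lra.
- rewrite -ler_pdivrMl //; apply: gauge_ge => s s0 Vs.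
  rewrite ler_pdivrMl //; apply: gauge_le; first exact: mulr_gt0.
  by rewrite scalerA invfM mulrAC mulVf ?gt_eqF // mul1r.
Qed.

End gauge.

Lemma convex_set_combination (R : realType) (X : lmodType R) (V : set X) :
  convex_set (V : set (convex_lmodType X)) ->
  forall a b (l : R), 0 <= l -> l <= 1 -> V a -> V b -> V (l *: a + (1 - l) *: b).
Proof.
move=> V_convex a b l l0 l1 Va Vb.
by have := V_convex a b (Itv01 l0 l1) (mem_set Va) (mem_set Vb); rewrite inE.
Qed.

Lemma nbhs0_absorbing (R : realType) (X : tvsType R) (V : set X) :
  nbhs (0 : X) V -> forall z : X, exists t : R, 0 < t /\ V (t^-1 *: z).
Proof.
move=> V0 z.
have := @scale_continuous R X (0, z) V; rewrite /= scale0r => /(_ V0).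
move=> [[B1 B2] /= [/nbhs_ballP [e /= e0 B1e] B2z] B_sub].
have e2 : 0 < e / 2 by rewrite divr_gt0.
exists (e / 2)^-1; split; first by rewrite invr_gt0.
rewrite invrK; apply: (B_sub (e / 2, z)); split => /=; last exact: nbhs_singleton.
by apply: B1e; rewrite /ball /= sub0r normrN gtr0_norm //; lra.
Qed.

Lemma linear_functional_continuous (R : realType) (X : tvsType R) (U : set X)
    (f : X -> R) :
  nbhs (0 : X) U -> linear_functional f -> (forall z, U z -> f z <= 1) ->
  continuous (f : X -> R^o).
Proof.
move=> U0 lf fU w; apply/cvgrPdist_lt => e e0.
have e2 : 0 < e / 2 by rewrite divr_gt0.
have sym_nbhs : nbhs (0 : X) ( *:%R (e / 2) @` (U `&` (-%R @` U))).
  by apply: nbhs0Z; [rewrite gt_eqF | apply: filterI => //; exact: nbhs0N].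
apply: filterS (nbhsT w sym_nbhs) => _ [_ [v [Uv [v' Uv' v'v]] <-] <-].
rewrite (linear_functionalD lf) (linear_functionalZ lf) opprD addrA subrr.
rewrite sub0r normrN normrM gtr0_norm //.
have := fU _ Uv'; rewrite -(opprK v') (linear_functionalN lf) v'v.
have := fU _ Uv => fv fNv.
have fv1 : `|f v| <= 1 by rewrite ler_norml; apply/andP; split; lra.
by apply: (@le_lt_trans _ _ (e / 2)); [rewrite ler_piMr // ltW | lra].
Qed.

(* In a Hausdorff locally convex space, continuous linear functionals separate
   the points: the gauge [p] of a convex neighbourhood of 0 avoiding [x] has
   [1 <= p x]; Hahn-Banach applied to the shift of [p] along [x] yields a
   linear [f <= p] with [1 <= f x], continuous since [f <= 1] near 0. *)
Lemma dual_separates_points (R : realType) (X : tvsType R) :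
  hausdorff_space X -> forall x : X, x <> 0 -> exists2 f, dual f & f x <> 0.
Proof.
move=> hX x x0.
have [A A0 Ax] : exists2 A : set X, nbhs 0 A & ~ A x.
  apply: contrapT => no_nbhs; apply: x0; apply: hX => A B Ax B0.
  apply: contrapT => AB0; apply: no_nbhs; exists B => // Bx.
  by apply: AB0; exists x; split => //; exact: nbhs_singleton.
have [B B_convex [B_open B_basis]] := @locally_convex R X.
have [U [BU U0] UA] := B_basis 0 A A0.
have U0_nbhs : nbhs (0 : X) U by apply: open_nbhs_nbhs; split => //; exact: B_open.
have U_convex := convex_set_combination (B_convex U (mem_set BU)).
have U_absorbing := nbhs0_absorbing U0_nbhs.
have p_sub := gauge_sublinear U_convex U_absorbing.
have px : 1 <= gauge U x by apply: (gauge_ge1 U0 U_convex U_absorbing) => /UA.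
have [f lf f_shift] := hahn_banach_dominated (shift_sublinear p_sub px).
have f_le_p z : f z <= gauge U z := le_trans (f_shift z) (shift_le_self p_sub px z).
exists f.
  split=> [|]; first exact: lf.
  apply: linear_functional_continuous U0_nbhs lf _ => z Uz.
  exact: le_trans (f_le_p z) (gauge_le1 Uz).
have := le_trans (f_shift (- x)) (shift_opp p_sub px).
by rewrite (linear_functionalN lf); lra.
Qed.

Lemma dual_opp (R : realType) (X : tvsType R) (f : X -> R) :
  dual f -> dual (fun x => - f x).
Proof.
move=> [lf cf]; split=> [a x y|w]; first by rewrite lf opprD mulrN.
by apply: cvgN; exact: cf.
Qed.

(* If [C] is a nonempty set other than [{0}], then some functional of a
   weak*-dense subset [D] of the dual has a nonzero support function on [C]:
   otherwise every element of the dual would be nonpositive on [C], by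
   density, and so would its opposite, contradicting the separation of a
   nonzero point of [C]. *)
Lemma dense_dual_support_nonzero (R : realType) (X : tvsType R)
    (D : set (X -> R)) (C : set X) :
  hausdorff_space X ->
  (forall f, dual f -> forall (s : seq X) (e : R), 0 < e ->
     exists2 g, D g & forall x, x \in s -> `|f x - g x| < e) ->
  C !=set0 -> C <> [set 0] -> exists2 g, D g & supp_fun g C <> 0%E.
Proof.
move=> hX D_dense [w Cw] C_ne0.
have [y Cy y0] : exists2 y, C y & y <> 0.
  apply: contrapT => C_sub0; apply: C_ne0; apply/seteqP; split => [z Cz|z ->].
    by apply: contrapT => z0; apply: C_sub0; exists z.
  suff <- : w = 0 by [].
  by apply: contrapT => w0; apply: C_sub0; exists w.
have [f df fy] := dual_separates_points hX y0.
apply: contrapT => D_supp0.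
have nonpos h z : dual h -> C z -> h z <= 0.
  move=> dh Cz; rewrite leNgt; apply/negP => hz0.
  have [g Dg /(_ z)] := D_dense h dh [:: z] (h z) hz0.
  rewrite mem_seq1 eqxx => /(_ isT) hgz.
  have : ((g z)%:E <= supp_fun g C)%E by apply: ereal_sup_ubound; exists z.
  have -> : supp_fun g C = 0%E.
    by apply: contrapT => gC; apply: D_supp0; exists g.
  by rewrite lee_fin => gz; have := ler_norm (h z - g z); lra.
by have := nonpos f y df Cy; have := nonpos _ y (dual_opp df) Cy; lra.
Qed.

Definition pairwise_disjoint (T : Type) (F : set (set T)) :=
  forall A B, F A -> F B -> A <> B -> A `&` B = set0.

Section signed_measure.
Context d (T : measurableType d) (R : realType) (mu : set T -> \bar R).
Hypothesis mu0 : mu set0 = 0%E.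
Hypothesis mu_gtNy : forall E, measurable E -> (-oo < mu E)%E.
Hypothesis mu_sigma : semi_sigma_additive mu.
Hypothesis mu_sigma_finite : sigma_finite setT mu.

Lemma measure_fin_num_sub A C : measurable A -> measurable C -> A `<=` C ->
  (mu C < +oo)%E -> mu A \is a fin_num.
Proof.
move=> mA mC AC muC; rewrite fin_numE gt_eqF ?mu_gtNy //=.
have mCA : measurable (C `\` A) by exact: measurableD.
have muCA : mu C = (mu A + mu (C `\` A))%E.
  rewrite -[in LHS](setDUK AC).
  have /(additive2P mu0) := semi_sigma_additive_is_additive mu0 mu_sigma.
  by apply => //; exact: setDIK.
apply/eqP => muA; move: muC; rewrite muCA muA addye ?ltxx //.
by rewrite gt_eqF ?mu_gtNy.
Qed.

(* Inside a set of finite measure, the measures of a disjoint sequence of sets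
   form a convergent series, hence tend to 0. *)
Lemma disjoint_measure_cvg0 (B : (set T)^nat) C :
  (forall n, measurable (B n)) -> trivIset setT B ->
  measurable C -> \bigcup_n B n `<=` C -> (mu C < +oo)%E ->
  (fun n => fine (mu (B n))) @ \oo --> 0.
Proof.
move=> mB tB mC BC muC.
have mU : measurable (\bigcup_n B n) := bigcupT_measurable _ mB.
have Bfin n : mu (B n) \is a fin_num.
  by apply: measure_fin_num_sub (mB n) mC _ muC => x Bx; apply: BC; exists n.
have := mu_sigma mB tB mU.
rewrite -(fineK (measure_fin_num_sub mU mC BC muC)) => /fine_cvgP[_].
have -> : fine \o (fun n => \sum_(0 <= i < n) mu (B i))%E =
          series (fun n => fine (mu (B n))).
  apply: funext => n /=; rewrite seriesEnat /=.
  by under eq_bigr do rewrite -(fineK (Bfin _)); rewrite sumEFin.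
by move=> cvg_sum; apply: cvg_series_cvg_0; apply/cvg_ex; eexists; exact: cvg_sum.
Qed.

Lemma finitely_many_large_traces (F : set (set T)) C (c : R) :
  (forall A, F A -> measurable A) -> pairwise_disjoint F ->
  measurable C -> (mu C < +oo)%E -> 0 < c ->
  finite_set [set A | F A /\ c < `|fine (mu (A `&` C))|].
Proof.
move=> mF dF mC muC c0; set G := [set A | _].
apply: contrapT => /infiniteP /pcard_leP [f].
have fG n : G (f n) by apply: (@funS _ _ [set: nat] G f n).
have f_inj m n : f m = f n -> m = n.
  by move=> e; apply: (@inj _ _ [set: nat] f) => //; rewrite inE.
pose B n := f n `&` C.
have mB n : measurable (B n) := measurableI _ _ (mF _ (fG n).1) mC.
have tB : trivIset setT B.
  move=> m n _ _ [x [[fmx _] [fnx _]]]; apply: f_inj; apply: contrapT => mn.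
  have : (f m `&` f n) x by [].
  by rewrite (dF _ _ (fG m).1 (fG n).1 mn).
have BC : \bigcup_n B n `<=` C by move=> x [n _ []].
have /cvgr0Pnorm_lt /(_ c c0) [N _ small] :=
  disjoint_measure_cvg0 mB tB mC BC muC.
by have := small N (leqnn N); rewrite ltNge ltW //; exact: (fG N).2.
Qed.

Lemma nonnull_trace (S : (set T)^nat) A :
  (forall k, measurable (S k)) -> trivIset setT S -> \bigcup_k S k = setT ->
  measurable A -> mu A <> 0%E -> exists k, mu (A `&` S k) <> 0%E.
Proof.
move=> mS tS coverS mA muA; apply: contrapT => all0; apply: muA.
have null k : mu (A `&` S k) = 0%E by apply: contrapT => ?; apply: all0; exists k.
have mAS k : measurable (A `&` S k) := measurableI _ _ mA (mS k).
have := mu_sigma mAS (@trivIset_setIl _ _ _ S (fun=> A) tS).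
rewrite -setI_bigcupr coverS setIT => /(_ mA).
under eq_fun do rewrite big1 //.
by move/cvg_lim => <- //; rewrite lim_cst.
Qed.

(* Cut the space into
   disjoint pieces [S k] of finite measure; a non-null set has a trace of
   norm larger than some [1 / m.+1] on some piece, and for fixed [k] and [m]
   there are finitely many such sets. *)
Theorem disjoint_nonnull_countable (F : set (set T)) :
  (forall A, F A -> measurable A) -> pairwise_disjoint F ->
  countable [set A | F A /\ mu A <> 0%E].
Proof.
move=> mF dF; have [U coverU Ufin] := mu_sigma_finite.
pose S := seqDU U.
have mS : forall k, measurable (S k) := seqDU_measurable (fun k => (Ufin k).1).
have muS k : (mu (S k) < +oo)%E.
  have := measure_fin_num_sub (mS k) (Ufin k).1 (@subset_seqDU _ U k) (Ufin k).2.
  by rewrite fin_numE => /andP[_]; rewrite ltey.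
have coverS : \bigcup_k S k = setT by rewrite -seqDU_bigcup_eq coverU.
have F_sub : [set A | F A /\ mu A <> 0%E] `<=` \bigcup_(k in [set: nat])
    \bigcup_(m in [set: nat]) [set A | F A /\ m.+1%:R^-1 < `|fine (mu (A `&` S k))|].
  move=> A [FA muA].
  have [k muAS] := nonnull_trace mS (trivIset_seqDU U) coverS (mF A FA) muA.
  have ASfin : mu (A `&` S k) \is a fin_num.
    apply: measure_fin_num_sub (measurableI _ _ (mF A FA) (mS k)) (mS k) _ (muS k).
    exact: subIsetr.
  have r0 : 0 < `|fine (mu (A `&` S k))|.
    by rewrite normr_gt0; apply/eqP => r0; apply: muAS; rewrite -(fineK ASfin) r0.
  have [m _ hm] := near_infty_natSinv_lt (PosNum r0).
  by exists k => //; exists m => //; split => //; exact: hm (leqnn m).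
apply: sub_countable (subset_card_le F_sub) _.
apply: bigcup_countable; first exact: countableP.
move=> k _; apply: bigcup_countable; first exact: countableP.
move=> m _; apply: finite_set_countable.
by apply: finitely_many_large_traces mF dF (mS k) (muS k) _; rewrite invr_gt0.
Qed.

End signed_measure.

Theorem theorem3p5 (R : realType) (X : tvsType R) (d : measure_display)
  (T : measurableType d) :
  hausdorff_space X -> weak_star_separable X ->
  forall M : set T -> set X, multimeasure M -> ccc M.
Proof.
move=> hX [D [D_countable D_dual D_dense]] M [M_cX M_meas] F F_nonnull F_disj.
have F_meas A : F A -> measurable A by move=> /F_nonnull[].
have F_cover : F `<=` \bigcup_(g in D) [set A | F A /\ supp_fun g (M A) <> 0%E].
  move=> A FA; have [mA A_nonnull] := F_nonnull A FA.
  have [M_ne _] := M_cX A mA.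
  have [g Dg gA] := dense_dual_support_nonzero hX D_dense M_ne
    (fun MA0 => A_nonnull (conj mA MA0)).
  by exists g.
apply: sub_countable (subset_card_le F_cover) _.
apply: bigcup_countable => // g Dg.
have [mu0 mu_gtNy mu_sigma mu_sigma_finite] := M_meas g (D_dual g Dg).
exact: (@disjoint_nonnull_countable _ _ _ (fun E => supp_fun g (M E))
  mu0 mu_gtNy mu_sigma mu_sigma_finite _ F_meas F_disj).
Qed.
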